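(* Let $G=(V,E)$ be a graph and let $\hat{\mathcal{C}}$ be one of the sets $\widehat{\mathrm{TH}}(G):=\{\hat X\in\mathbb{S}^{\{0\}\cup V}_+ : \hat X_{00}=1,\ \hat X_{ii}=\hat X_{0i}\ \forall i\in V,\ \hat X_{ij}=0\ \forall ij\in E\}$, $\widehat{\mathrm{TH}}'(G):=\{\hat X\in\widehat{\mathrm{TH}}(G) : \hat X_{ij}\ge 0\ \forall ij\in\binom{V}{2}\setminus E\}$, or $\widehat{\mathrm{TH}}^+(G):=\{\hat X\in\mathbb{S}^{\{0\}\cup V}_+ : \hat X_{00}=1,\ \hat X_{ii}=\hat X_{0i}\ \forall i\in V,\ \hat X_{ij}\le 0\ \forall ij\in E\}$. Then a point $\hat X$ of $\hat{\mathcal{C}}$ is a vertex of $\hat{\mathcal{C}}$ if and only if $\operatorname{rank}(\hat X)=1$. Thus the vertices of $\hat{\mathcal{C}}$ are precisely the matrices $(1\oplus\chi^S)(1\oplus\chi^S)^{\mathsf T}$ where $S\subseteq V$ is a stable set of $G$.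
   Context: $0$ is a new index not in $V$; $\mathbb{S}^{W}_+$ denotes real symmetric positive semidefinite matrices indexed by $W$, with trace inner product. $\chi^S\in\{0,1\}^V$ is the incidence vector of $S$, and $1\oplus\chi^S\in\mathbb{R}^{\{0\}\cup V}$ has $0$-entry $1$. For a convex set $\mathcal{C}$ in a finite-dimensional space $\mathbb{E}$ and $\bar x\in\mathcal{C}$, the normal cone is $N_{\mathcal{C}}(\bar x):=\{c : \langle c,x\rangle\le\langle c,\bar x\rangle\ \forall x\in\mathcal{C}\}$; $\bar x$ is a vertex if $\dim N_{\mathcal{C}}(\bar x)=\dim\mathbb{E}$. *)

From HB Require Import structures.
From mathcomp Require Import all_boot all_order all_algebra.
From mathcomp Require Import reals.
Set Implicit Arguments. Unset Strict Implicit. Unset Printing Implicit Defensive.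
Import Order.TTheory GRing.Theory Num.Theory.
Local Open Scope ring_scope.

(* Vertex set V = 'I_n; the extra index 0 is ord0 of 'I_n.+1 and
   vertex i : 'I_n is represented by lift ord0 i. *)
Definition vtx {n : nat} (i : 'I_n) : 'I_n.+1 := lift ord0 i.

Definition simple_graph {n : nat} (e : rel 'I_n) : Prop :=
  (forall i j, e i j = e j i) /\ (forall i, ~~ e i i).

Definition stable_set {n : nat} (e : rel 'I_n) (S : {set 'I_n}) : Prop :=
  forall i j, i \in S -> j \in S -> ~~ e i j.

Definition symmetricmx {R : realType} {m : nat} (A : 'M[R]_m) : Prop := A^T = A.

Definition psdmx {R : realType} {m : nat} (A : 'M[R]_m) : Prop :=
  symmetricmx A /\ forall v : 'cV[R]_m, 0 <= (v^T *m A *m v) 0 0.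

Definition tr_inner {R : realType} {m : nat} (C X : 'M[R]_m) : R := \tr (C^T *m X).

Definition TH_hat {R : realType} {n : nat} (e : rel 'I_n) (X : 'M[R]_n.+1) : Prop :=
  [/\ psdmx X, X ord0 ord0 = 1,
      (forall i : 'I_n, X (vtx i) (vtx i) = X ord0 (vtx i))
    & (forall i j : 'I_n, e i j -> X (vtx i) (vtx j) = 0)].

Definition TH_hat' {R : realType} {n : nat} (e : rel 'I_n) (X : 'M[R]_n.+1) : Prop :=
  TH_hat e X /\
  (forall i j : 'I_n, i != j -> ~~ e i j -> 0 <= X (vtx i) (vtx j)).

Definition TH_hat_plus {R : realType} {n : nat} (e : rel 'I_n) (X : 'M[R]_n.+1) : Prop :=
  [/\ psdmx X, X ord0 ord0 = 1,
      (forall i : 'I_n, X (vtx i) (vtx i) = X ord0 (vtx i))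
    & (forall i j : 'I_n, e i j -> X (vtx i) (vtx j) <= 0)].

Inductive THkind := KTH | KTHprime | KTHplus.

Definition THset {R : realType} {n : nat} (k : THkind) (e : rel 'I_n) : 'M[R]_n.+1 -> Prop :=
  match k with
  | KTH => TH_hat e
  | KTHprime => TH_hat' e
  | KTHplus => TH_hat_plus e
  end.

Definition normal_cone {R : realType} {m : nat} (C : 'M[R]_m -> Prop) (Xb : 'M[R]_m)
  (c : 'M[R]_m) : Prop :=
  symmetricmx c /\ forall X, C X -> tr_inner c X <= tr_inner c Xb.

(* Xb is a vertex of C iff dim N_C(Xb) = dim E, where E = symmetric matrices.
   Since N_C(Xb) is a subset of E, this says: the linear span of N_C(Xb)
   is all of E, i.e. every symmetric matrix is a finite linear combination
   of elements of the normal cone. *)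
Definition is_vertex {R : realType} {m : nat} (C : 'M[R]_m -> Prop) (Xb : 'M[R]_m) : Prop :=
  C Xb /\
  forall A : 'M[R]_m, symmetricmx A ->
    exists s : seq 'M[R]_m, (forall c, c \in s -> normal_cone C Xb c) /\ A \in <<s>>%VS.

Definition one_chi {R : realType} {n : nat} (S : {set 'I_n}) : 'cV[R]_n.+1 :=
  \col_(k < n.+1) (if unlift ord0 k is Some j then (j \in S)%:R else 1).

From Pilot Require Import Defs.
From HB Require Import structures.
From mathcomp Require Import all_boot all_order all_algebra.
From mathcomp Require Import reals ring lra.
Import Order.TTheory GRing.Theory Num.Theory.
Local Open Scope ring_scope.
Set Implicit Arguments. Unset Strict Implicit. Unset Printing Implicit Defensive.

(* If every entry X_0a of a point X of C is 0 or 1, the diagonal matrix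
   c0 = Diag(2 X_0a - 1) is a normal vector at X, and the psd constraints bound
   |Z_ab - X_ab| linearly by the gap <c0, X - Z>; hence c0 + t A is normal for any
   symmetric A and small t > 0, and the normal cone spans everything.
   If instead 0 < X_0l < 1 for some l, a congruence curve (I + tN)^T X (I + tN),
   renormalised at the 00 entry, stays in C for small |t| and has a nonzero tangent
   at X, to which every normal vector is orthogonal.  For points of C the first
   condition is equivalent to rank X = 1, and then X = (1 + chi^S)(1 + chi^S)^T
   with S = {i | X_0i = 1}, which is stable because of the edge constraints. *)

Lemma ler_sum_term (R : numDomainType) (I : finType) (F : I -> R) (i : I) :
  (forall j, 0 <= F j) -> F i <= \sum_j F j.
Proof. by move=> F_ge0; rewrite (bigD1 i) //= lerDl sumr_ge0. Qed.

Lemma quadratic_le0_near0 (R : realFieldType) (a b eps : R) : 0 < eps ->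
  (forall t, `|t| < eps -> a * t + b * t ^+ 2 <= 0) -> a = 0.
Proof.
move=> eps_gt0 hle; apply/eqP/negPn/negP => a_neq0.
have a_gt0 : 0 < `|a| by rewrite normr_gt0.
have b_ge0 := normr_ge0 b.
pose den := 2 * (`|a| + eps * `|b|).
have den_gt0 : 0 < den by rewrite /den; nra.
pose d := eps * `|a| / den.
have dE : d * den = eps * `|a| by rewrite mulfVK ?gt_eqF.
have d_gt0 : 0 < d by apply: divr_gt0 => //; apply: mulr_gt0.
have d_lt_eps : d < eps by rewrite -(ltr_pM2r den_gt0) dE /den; nra.
have bd : `|b| * d <= `|a| / 2 by rewrite -(ler_pM2r den_gt0) -mulrA dE /den; nra.
have := hle (Num.sg a * d).
rewrite normrM normr_sg a_neq0 mul1r gtr0_norm // => /(_ d_lt_eps).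
rewrite exprMn sqr_sg a_neq0 mul1r mulrA (mulrC a) -normrEsg.
have : - `|b| <= b by rewrite lerNl ler_normr lexx orbT.
nra.
Qed.

Section Forms.
Variables (R : realType) (m : nat).
Implicit Types (X Y c D : 'M[R]_m) (u w : 'cV[R]_m).

Lemma symmetricmxE X : Defs.symmetricmx X -> forall a b, X a b = X b a.
Proof. by move=> XT a b; rewrite -{1}XT mxE. Qed.

Definition bform X u w := (u^T *m X *m w) 0 0.

Lemma bformDl X u1 u2 w : bform X (u1 + u2) w = bform X u1 w + bform X u2 w.
Proof. by rewrite /bform linearD /= !mulmxDl mxE. Qed.

Lemma bformDr X u w1 w2 : bform X u (w1 + w2) = bform X u w1 + bform X u w2.
Proof. by rewrite /bform !mulmxDr mxE. Qed.

Lemma bformZl X a u w : bform X (a *: u) w = a * bform X u w.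
Proof. by rewrite /bform linearZ /= -!scalemxAl mxE. Qed.

Lemma bformZr X a u w : bform X u (a *: w) = a * bform X u w.
Proof. by rewrite /bform -!scalemxAr mxE. Qed.

Lemma bform_delta X a b : bform X (delta_mx a 0) (delta_mx b 0) = X a b.
Proof. by rewrite /bform trmx_delta -rowE -colE !mxE. Qed.

Lemma psdmx_ge0_3 X (a b l : 'I_m) (x y z : R) : psdmx X ->
  0 <= x ^+ 2 * X a a + y ^+ 2 * X b b + z ^+ 2 * X l l
       + 2 * x * y * X a b + 2 * x * z * X a l + 2 * y * z * X b l.
Proof.
case=> XT X_ge0; have := X_ge0 (x *: delta_mx a 0 + y *: delta_mx b 0 + z *: delta_mx l 0).
rewrite -/(bform _ _ _) !(bformDl, bformDr, bformZl, bformZr) !bform_delta.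
by rewrite !(symmetricmxE XT b a) !(symmetricmxE XT l a) !(symmetricmxE XT l b); nra.
Qed.

Lemma psdmx_diag0 X a b : psdmx X -> X b b = 0 -> X a b = 0.
Proof.
move=> X_psd Xbb; apply/eqP/negPn/negP => Xab.
have Xaa : 0 <= X a a by have := psdmx_ge0_3 a a a 1 0 0 X_psd; nra.
have := psdmx_ge0_3 a b b 1 (- (X a a + 1) / (2 * X a b)) 0 X_psd.
rewrite Xbb; have -> : 2 * 1 * (- (X a a + 1) / (2 * X a b)) * X a b = - (X a a + 1).
  by field; rewrite Xab.
nra.
Qed.

Lemma psdmx_congr (M X : 'M[R]_m) : psdmx X -> psdmx (M^T *m X *m M).
Proof.
case=> XT X_ge0; split; first by rewrite /Defs.symmetricmx !trmx_mul trmxK XT mulmxA.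
by move=> v; have := X_ge0 (M *m v); rewrite trmx_mul !mulmxA.
Qed.

Lemma psdmxZ (a : R) X : 0 <= a -> psdmx X -> psdmx (a *: X).
Proof.
move=> a_ge0 [XT X_ge0]; split; first by rewrite /Defs.symmetricmx linearZ /= XT.
by move=> v; rewrite -scalemxAr -scalemxAl mxE mulr_ge0.
Qed.

Lemma psdmx_outer u : psdmx (u *m u^T).
Proof.
split; first by rewrite /Defs.symmetricmx trmx_mul trmxK.
move=> v; rewrite mulmxA -mulmxA mxE big_ord1.
have -> : (v^T *m u) 0 0 = (u^T *m v) 0 0 by rewrite -[v^T *m u]trmxK trmx_mul trmxK mxE.
by rewrite -expr2 sqr_ge0.
Qed.

Lemma outerE u a b : (u *m u^T) a b = u a 0 * u b 0.
Proof. by rewrite !mxE big_ord1 mxE. Qed.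

Lemma tr_innerE c X : tr_inner c X = \sum_a \sum_b c a b * X a b.
Proof.
rewrite /tr_inner /mxtrace exchange_big /=; apply: eq_bigr => a _.
by rewrite mxE; apply: eq_bigr => b _; rewrite mxE.
Qed.

Lemma tr_innerDl c1 c2 X : tr_inner (c1 + c2) X = tr_inner c1 X + tr_inner c2 X.
Proof. by rewrite /tr_inner linearD /= mulmxDl mxtraceD. Qed.

Lemma tr_innerZl a c X : tr_inner (a *: c) X = a * tr_inner c X.
Proof. by rewrite /tr_inner linearZ /= -scalemxAl mxtraceZ. Qed.

Lemma tr_innerDr c X Y : tr_inner c (X + Y) = tr_inner c X + tr_inner c Y.
Proof. by rewrite /tr_inner mulmxDr mxtraceD. Qed.

Lemma tr_innerZr a c X : tr_inner c (a *: X) = a * tr_inner c X.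
Proof. by rewrite /tr_inner -scalemxAr mxtraceZ. Qed.

Lemma tr_innerNr c X : tr_inner c (- X) = - tr_inner c X.
Proof. by rewrite -scaleN1r tr_innerZr mulN1r. Qed.

Lemma tr_innerBr c X Y : tr_inner c (X - Y) = tr_inner c X - tr_inner c Y.
Proof. by rewrite tr_innerDr tr_innerNr. Qed.

Lemma sqr_le_tr_inner X a b : X a b ^+ 2 <= tr_inner X X.
Proof.
rewrite tr_innerE expr2; apply: le_trans (ler_sum_term a _) => [|i].
  by apply: le_trans (ler_sum_term b _) => // j; rewrite -expr2 sqr_ge0.
by apply: sumr_ge0 => j _; rewrite -expr2 sqr_ge0.
Qed.

Lemma tr_inner_span0 (s : seq 'M[R]_m) D c :
  (forall c, c \in s -> tr_inner c D = 0) -> c \in <<s>>%VS -> tr_inner c D = 0.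
Proof.
move=> s_orth c_span; rewrite (coord_span (X := in_tuple s) c_span).
rewrite /tr_inner linear_sum /= mulmx_suml raddf_sum; apply: big1 => i _.
rewrite linearZ /= -scalemxAl mxtraceZ -/(tr_inner _ _) s_orth ?mulr0 //.
by apply: mem_nth; rewrite /= ltn_ord.
Qed.

End Forms.

Section NormalCone.
Variables (R : realType) (m : nat) (C : 'M[R]_m -> Prop).
Implicit Types (X Z A c D : 'M[R]_m).

Lemma vertex_of_sharp_normal X c0 (K : R) :
  C X -> normal_cone C X c0 -> 0 <= K ->
  (forall Z, C Z -> forall a b, `|Z a b - X a b| <= K * (tr_inner c0 X - tr_inner c0 Z)) ->
  is_vertex C X.
Proof.
move=> CX [c0T c0_max] K_ge0 sharp; split => // A AT.
pose SA := \sum_a \sum_b `|A a b|.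
have SA_ge0 : 0 <= SA by do 2!apply: sumr_ge0 => ? _.
pose r := 1 + K * SA.
have r_gt0 : 0 < r by rewrite /r; nra.
pose c1 := c0 + r^-1 *: A.
have c1_normal : normal_cone C X c1.
  split; first by rewrite /Defs.symmetricmx /c1 linearD linearZ /= c0T AT.
  move=> Z CZ; rewrite !tr_innerDl !tr_innerZl.
  have gap_ge0 : 0 <= tr_inner c0 X - tr_inner c0 Z by rewrite subr_ge0 c0_max.
  have AZ : tr_inner A Z - tr_inner A X <= SA * (K * (tr_inner c0 X - tr_inner c0 Z)).
    rewrite -tr_innerBr tr_innerE /SA mulr_suml; apply: ler_sum => a _.
    rewrite mulr_suml; apply: ler_sum => b _; rewrite !mxE.
    apply: le_trans (ler_norm _) _; rewrite normrM ler_wpM2l //.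
    by have := sharp Z CZ a b; rewrite distrC.
  have : r^-1 * (tr_inner A Z - tr_inner A X) <= tr_inner c0 X - tr_inner c0 Z.
    rewrite ler_pdivrMl //; apply: le_trans AZ _; rewrite /r; nra.
  lra.
exists [:: c0; c1]; split; first by move=> c; rewrite !inE => /orP[] /eqP ->.
have -> : A = r *: (c1 - c0) by rewrite /c1 addrAC subrr add0r scalerA divff ?gt_eqF ?scale1r.
by apply/memvZ/memvB; apply: memv_span; rewrite !inE eqxx ?orbT.
Qed.

Lemma not_vertex_of_normal_orth X D : Defs.symmetricmx D -> D != 0 ->
  (forall c, normal_cone C X c -> tr_inner c D = 0) -> ~ is_vertex C X.
Proof.
move=> DT D_neq0 D_orth [_ /(_ D DT) [s [s_normal D_span]]].
have DD0 := tr_inner_span0 (fun c cs => D_orth c (s_normal c cs)) D_span.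
case/eqP: D_neq0; apply/matrixP => a b; rewrite mxE.
by apply/eqP; rewrite -sqrf_eq0 eq_le sqr_ge0 andbT -DD0 sqr_le_tr_inner.
Qed.

Lemma normal_cone_orth_tangent X (P : R -> 'M[R]_m) P1 P2 c (i : 'I_m) (eps : R) :
  0 < eps -> X i i = 1 -> normal_cone C X c ->
  (forall t, P t = X + t *: P1 + t ^+ 2 *: P2) ->
  (forall t, `|t| < eps -> 0 < P t i i /\ C ((P t i i)^-1 *: P t)) ->
  tr_inner c (P1 - P1 i i *: X) = 0.
Proof.
move=> eps_gt0 Xii [_ c_max] PE P_in.
apply: (@quadratic_le0_near0 _ _ (tr_inner c P2 - P2 i i * tr_inner c X) eps) => // t t_lt.
have [q_gt0 CP] := P_in t t_lt.
have := c_max _ CP; rewrite tr_innerZr -ler_pdivlMl ?invr_gt0 // invrK.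
rewrite tr_innerBr tr_innerZr PE !tr_innerDr !tr_innerZr !mxE Xii.
nra.
Qed.

End NormalCone.

Section THbase.
Variables (R : realType) (n : nat).
Implicit Types X Z : 'M[R]_n.+1.
Local Notation o := (ord0 : 'I_n.+1).

Definition THbase X := [/\ psdmx X, X o o = 1 & forall a, X a a = X o a].

Definition row0_01 X := forall a, X o a = 0 \/ X o a = 1.

Lemma THset_base (k : THkind) (e : rel 'I_n) X : THset k e X -> THbase X.
Proof.
have base Y : psdmx Y -> Y o o = 1 -> (forall i, Y (vtx i) (vtx i) = Y o (vtx i)) -> THbase Y.
  move=> Y_psd Y00 Ydiag; split=> // a.
  by case: (unliftP o a) => [i ->|->] //; apply: Ydiag.
by case: k => /=; [case | case=> [[]] | case] => *; apply: base.
Qed.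

Lemma THbase_sym X : THbase X -> forall a b, X a b = X b a.
Proof. by case=> [[XT _]] _ _; apply: symmetricmxE. Qed.

Lemma THbase_row0_bounds X a : THbase X -> 0 <= X o a <= 1.
Proof.
case=> X_psd X00 Xdiag; have := psdmx_ge0_3 o a a (- X o a) 1 0 X_psd.
rewrite Xdiag X00 => ?; apply/andP; split; nra.
Qed.

(* Twice the deviation from the rank-one pattern [X_ab = x_a x_b] is bounded by the
   "fractionality" [x (1 - x)] of the row entries, via the test vectors
   [-(x_a + x_b) e_0 + e_a + e_b] and [-(x_a - x_b) e_0 + e_a - e_b]. *)
Lemma THbase_dev X a b : THbase X ->
  `|X a b - X o a * X o b| <= (X o a - X o a ^+ 2 + X o b - X o b ^+ 2) / 2.
Proof.
case=> X_psd X00 Xdiag.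
have := psdmx_ge0_3 o a b (- (X o a + X o b)) 1 1 X_psd.
have := psdmx_ge0_3 o a b (- (X o a - X o b)) 1 (-1) X_psd.
rewrite !Xdiag X00 => ? ?; rewrite ler_norml; apply/andP; split; nra.
Qed.

Lemma THbase_01E X : THbase X -> row0_01 X ->
  forall a b, X a b = X o a * X o b.
Proof.
move=> X_base X01 a b; have := THbase_dev a b X_base.
have -> : (X o a - X o a ^+ 2 + X o b - X o b ^+ 2) / 2 = 0.
  by case: (X01 a) => ->; case: (X01 b) => ->; rewrite ?expr0n ?expr1n /=; lra.
by rewrite normr_le0 subr_eq0 => /eqP.
Qed.

Lemma THbase_rank1E X : THbase X -> \rank X = 1%N -> forall a b, X a b = X o a * X o b.
Proof.
move=> X_base rkX.
have pid1 : pid_mx 1 = delta_mx o o :> 'M[R]_n.+1.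
  by apply/matrixP => -[[|i] ?] [[|j] ?]; rewrite !mxE //= andbF.
pose u := col_ebase X *m delta_mx o (0 : 'I_1).
pose w := delta_mx (0 : 'I_1) o *m row_ebase X.
have XE a b : X a b = u a 0 * w 0 b.
  rewrite -{1}(mulmx_ebase X) rkX pid1 -(mul_delta_mx (0 : 'I_1)) mulmxA.
  by rewrite -(mulmxA _ _ (row_ebase X)) -/u -/w mxE big_ord1.
move=> a b; case: (X_base) => _ X00 _.
have : X a b * X o o = X a o * X o b by rewrite !XE; ring.
by rewrite X00 mulr1 (THbase_sym X_base a o).
Qed.

Lemma THbase_rank1_01 X : THbase X -> \rank X = 1%N -> row0_01 X.
Proof.
move=> X_base rkX a; have := THbase_rank1E X_base rkX a a.
case: X_base => _ _ ->; move/eqP; rewrite -subr_eq0 -{1}(mulr1 (X o a)) -mulrBr.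
by rewrite mulf_eq0 subr_eq0 => /orP[] /eqP; [left | right].
Qed.

Lemma rank_outer (u : 'cV[R]_n.+1) : u o 0 = 1 -> \rank (u *m u^T) = 1%N.
Proof.
move=> u0; apply/eqP; rewrite eqn_leq (leq_trans (mxrankM_maxl _ _) (rank_leq_col u)).
rewrite lt0n mxrank_eq0; apply/eqP => /matrixP /(_ o o).
by rewrite outerE u0 mulr1 !mxE => /eqP; rewrite oner_eq0.
Qed.

End THbase.

Lemma tr_inner_diag (R : realType) (m : nat) (d : 'rV[R]_m) (Z : 'M[R]_m) :
  tr_inner (diag_mx d) Z = \sum_a d 0 a * Z a a.
Proof.
rewrite /tr_inner tr_diag_mx mul_diag_mx /mxtrace.
by apply: eq_bigr => a _; rewrite mxE.
Qed.

Section Vertex.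
Variables (R : realType) (n : nat).
Implicit Types X Z : 'M[R]_n.+1.
Local Notation o := (ord0 : 'I_n.+1).

Lemma THbase_sharp X Z a b : THbase X -> row0_01 X -> THbase Z ->
  `|Z a b - X a b| <= 3 * \sum_c (2 * X o c - 1) * (X o c - Z o c).
Proof.
move=> X_base X01 Z_base; rewrite (THbase_01E X_base X01).
have u_ge0 c : 0 <= (2 * X o c - 1) * (X o c - Z o c).
  by have := THbase_row0_bounds c Z_base; case: (X01 c) => -> /andP[]; nra.
have := ler_sum_term a u_ge0; have := ler_sum_term b u_ge0.
have := THbase_dev a b Z_base; rewrite !ler_norml.
move: (THbase_row0_bounds a Z_base) (THbase_row0_bounds b Z_base).
by case: (X01 a) (X01 b) => -> [] ->; move=> /andP[? ?] /andP[? ?] /andP[? ?] ? ?;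
  apply/andP; split; nra.
Qed.

Lemma vertex_of_row0_01 (C : 'M[R]_n.+1 -> Prop) X :
  (forall Z, C Z -> THbase Z) -> C X -> row0_01 X -> is_vertex C X.
Proof.
move=> C_base CX X01; have X_base := C_base X CX.
pose c0 := diag_mx (\row_a (2 * X o a - 1)).
have gapE Z : THbase Z ->
    tr_inner c0 X - tr_inner c0 Z = \sum_c (2 * X o c - 1) * (X o c - Z o c).
  case=> _ _ Zdiag; case: X_base => _ _ Xdiag.
  rewrite !tr_inner_diag -sumrB; apply: eq_bigr => c _; rewrite !mxE Xdiag Zdiag; ring.
have gap_ge0 Z : THbase Z -> 0 <= tr_inner c0 X - tr_inner c0 Z.
  move=> Z_base; have := normr_ge0 (Z o o - X o o).
  by have := THbase_sharp o o X_base X01 Z_base; rewrite gapE //; lra.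
apply: (@vertex_of_sharp_normal _ _ _ _ c0 3) => //.
- split; first by rewrite /Defs.symmetricmx tr_diag_mx.
  by move=> Z /C_base Z_base; rewrite -subr_ge0 gap_ge0.
- by move=> Z /C_base Z_base a b; rewrite gapE //; apply: THbase_sharp.
Qed.

End Vertex.

Lemma congr_expand (R : comNzRingType) m (N X : 'M[R]_m) (t : R) :
  (1%:M + t *: N)^T *m X *m (1%:M + t *: N)
  = X + t *: (X *m N + N^T *m X) + t ^+ 2 *: (N^T *m X *m N).
Proof.
have -> : (1%:M + t *: N)^T = 1%:M + t *: N^T by apply/matrixP => i j; rewrite !mxE eq_sym.
rewrite !(mulmxDl, mulmxDr, mul1mx, mulmx1) -!scalemxAl -!scalemxAr scalerA -expr2.
by rewrite scalerDr !addrA (addrAC X).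
Qed.

Lemma mulmx_diag_delta (R : pzSemiRingType) m (A : 'M[R]_m) (d : 'rV[R]_m) (i j a b : 'I_m) :
  (A *m (diag_mx d + delta_mx i j)) a b = A a b * d 0 b + A a i * (j == b)%:R.
Proof.
rewrite mulmxDr mxE mul_mx_diag mxE; congr (_ + _).
rewrite mxE (bigD1 i) //= big1 ?addr0; first by rewrite mxE eqxx /= eq_sym.
by move=> l li; rewrite mxE (negPf li) mulr0.
Qed.

Lemma diag_delta_mulmx (R : pzSemiRingType) m (A : 'M[R]_m) (d : 'rV[R]_m) (i j a b : 'I_m) :
  ((diag_mx d + delta_mx i j) *m A) a b = d 0 a * A a b + (a == i)%:R * A j b.
Proof.
rewrite mulmxDl mxE mul_diag_mx mxE; congr (_ + _).
rewrite mxE (bigD1 j) //= big1 ?addr0; first by rewrite mxE eqxx andbT.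
by move=> l lj; rewrite mxE (negPf lj) andbF mul0r.
Qed.

Lemma THset_rescale (R : realType) n (k : THkind) (e : rel 'I_n) (X Y : 'M[R]_n.+1)
    (f : 'I_n -> 'I_n -> R) :
  THset k e X -> psdmx Y -> Y ord0 ord0 = 1 ->
  (forall i, Y (vtx i) (vtx i) = Y ord0 (vtx i)) -> (forall i j, 0 < f i j) ->
  (forall i j, Y (vtx i) (vtx j) = f i j * X (vtx i) (vtx j)) ->
  THset k e Y.
Proof.
move=> X_in Y_psd Y00 Ydiag f_gt0 YE; case: k X_in => /=.
- by case=> _ _ _ Xe; split=> // i j /Xe Xij; rewrite YE Xij mulr0.
- case=> -[_ _ _ Xe] Xnn; split; first by split=> // i j /Xe Xij; rewrite YE Xij mulr0.
  by move=> i j ij eij; rewrite YE mulr_ge0 ?Xnn // ltW.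
- by case=> _ _ _ Xe; split=> // i j /Xe Xij; rewrite YE mulr_ge0_le0 // ltW.
Qed.

Section NotVertex.
Variables (R : realType) (n : nat) (k : THkind) (e : rel 'I_n).
Variables (X : 'M[R]_n.+1) (l : 'I_n.+1).
Hypotheses (X_in : THset k e X) (Xl_gt0 : 0 < X ord0 l) (Xl_lt1 : X ord0 l < 1).
Local Notation o := (ord0 : 'I_n.+1).
Local Notation x := (X o l).

Let X_base := THset_base X_in.
Let Xsym := THbase_sym X_base.

Definition row_ratio : 'rV[R]_n.+1 :=
  \row_a (if (a == o) || (X o a == 0) then 0 else X l a / X o a).
Local Notation nu a := (row_ratio 0 a).

Lemma row_ratio0 : nu o = 0.
Proof. by rewrite mxE eqxx. Qed.

Lemma row_ratioE a : a != o -> nu a * X o a = X l a.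
Proof.
move=> a_neq0; rewrite mxE (negPf a_neq0) /=; case: eqP => [Xa0|/eqP Xa_neq0].
  have [X_psd _ Xdiag] := X_base.
  by rewrite Xa0 mulr0 (psdmx_diag0 _ X_psd) // Xdiag.
by rewrite mulfVK.
Qed.

Let l_neq0 : l != o.
Proof. by apply: contraTneq Xl_lt1 => ->; case: X_base => _ -> _; rewrite ltxx. Qed.

(* The curve rescales the Gram vectors [v_a] (a <> 0) by [1 + t nu_a] and moves [v_0]
   to [v_0 + t v_l]; [nu] is chosen so that the constraints [X_aa = X_0a] survive. *)
Definition tangent_mx : 'M[R]_n.+1 := diag_mx row_ratio + delta_mx l o.
Definition curve t := (1%:M + t *: tangent_mx)^T *m X *m (1%:M + t *: tangent_mx).
Definition curve_velocity := X *m tangent_mx + tangent_mx^T *m X.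

Lemma tangent_mxT : tangent_mx^T = diag_mx row_ratio + delta_mx o l.
Proof. by rewrite linearD /= tr_diag_mx trmx_delta. Qed.

Lemma curve_velocityE a b : curve_velocity a b =
  X a b * nu b + X a l * (o == b)%:R + nu a * X a b + (a == o)%:R * X l b.
Proof. by rewrite mxE tangent_mxT /tangent_mx mulmx_diag_delta diag_delta_mulmx addrA. Qed.

Lemma curveE t a b : curve t a b = X a b + t * curve_velocity a b
  + t ^+ 2 * ((nu a * X a b + (a == o)%:R * X l b) * nu b
              + (nu a * X a l + (a == o)%:R * X l l) * (o == b)%:R).
Proof.
pose N2 := tangent_mx^T *m X *m tangent_mx.
have -> : curve t a b = X a b + t * curve_velocity a b + t ^+ 2 * N2 a b.
  by rewrite /curve congr_expand !mxE.
by rewrite /N2 tangent_mxT /tangent_mx mulmx_diag_delta !diag_delta_mulmx.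
Qed.

Lemma curve00 t : curve t o o = 1 + 2 * x * t + x * t ^+ 2.
Proof.
case: X_base => _ X00 Xdiag.
by rewrite curveE curve_velocityE row_ratio0 eqxx X00 Xdiag (Xsym l o) /=; ring.
Qed.

Lemma curve00_gt0 t : 0 < curve t o o.
Proof.
have -> : curve t o o = x * (1 + t) ^+ 2 + (1 - x) by rewrite curve00; ring.
have := mulr_ge0 (ltW Xl_gt0) (sqr_ge0 (1 + t)).
by move=> h; apply: ltr_wpDl h _; rewrite subr_gt0.
Qed.

Lemma curve_offdiag t a b : a != o -> b != o ->
  curve t a b = (1 + t * nu a) * (1 + t * nu b) * X a b.
Proof.
move=> /negPf a_neq0 /negPf b_neq0.
by rewrite curveE curve_velocityE a_neq0 (eq_sym o) b_neq0 /=; ring.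
Qed.

Lemma curve_diag t b : b != o -> curve t b b = curve t o b.
Proof.
move=> b_neq0; rewrite curve_offdiag // curveE curve_velocityE row_ratio0 eqxx.
rewrite eq_sym (negPf b_neq0) -(row_ratioE b_neq0) /=; case: X_base => _ _ ->; ring.
Qed.

Definition curve_radius : R := (1 + \sum_a `|nu a|)^-1.

Lemma curve_radius_gt0 : 0 < curve_radius.
Proof. by rewrite invr_gt0 ltr_wpDr ?sumr_ge0. Qed.

Lemma curve_factor_gt0 t a : `|t| < curve_radius -> 0 < 1 + t * nu a.
Proof.
move=> t_lt; have S_gt0 : 0 < 1 + \sum_a `|nu a| by rewrite ltr_wpDr ?sumr_ge0.
have nu_le : `|nu a| <= 1 + \sum_a `|nu a|.
  by rewrite (le_trans (ler_sum_term a (fun _ => normr_ge0 _))) ?lerDr.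
have : `|t * nu a| < 1.
  rewrite normrM; apply: le_lt_trans (ler_wpM2l (normr_ge0 t) nu_le) _.
  by rewrite -ltr_pdivlMr // mul1r.
by rewrite ltr_norml => /andP[? _]; lra.
Qed.

Lemma normalized_curve_in t : `|t| < curve_radius ->
  THset k e ((curve t o o)^-1 *: curve t).
Proof.
move=> t_lt; have q_gt0 := curve00_gt0 t.
have vtx_neq0 i : vtx i != o by rewrite eq_sym neq_lift.
apply: (@THset_rescale _ _ _ _ X _
  (fun i j => (curve t o o)^-1 * ((1 + t * nu (vtx i)) * (1 + t * nu (vtx j))))) => //.
- by apply: psdmxZ; [rewrite invr_ge0 ltW | apply: psdmx_congr; case: X_base].
- by rewrite mxE mulVf ?gt_eqF.
- by move=> i; rewrite [LHS]mxE [RHS]mxE curve_diag.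
- by move=> i j; rewrite mulr_gt0 ?invr_gt0 // mulr_gt0 // curve_factor_gt0.
- by move=> i j; rewrite [LHS]mxE (curve_offdiag _ (vtx_neq0 i) (vtx_neq0 j)) mulrA.
Qed.

Definition curve_tangent := curve_velocity - curve_velocity o o *: X.

Lemma curve_tangent_sym : Defs.symmetricmx curve_tangent.
Proof.
case: X_base => -[XT _] _ _.
have vT : curve_velocity^T = curve_velocity.
  by rewrite /curve_velocity linearD /= !trmx_mul trmxK XT addrC.
by rewrite /Defs.symmetricmx /curve_tangent linearB /= linearZ /= vT XT.
Qed.

Lemma curve_tangent_0l : curve_tangent o l = 2 * x * (1 - x).
Proof.
case: X_base => _ X00 Xdiag.
have nul : nu l = 1.
  by apply: (mulIf (lt0r_neq0 Xl_gt0)); rewrite row_ratioE ?l_neq0 // mul1r Xdiag.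
have -> : curve_tangent o l = curve_velocity o l - curve_velocity o o * x by rewrite !mxE.
rewrite !curve_velocityE row_ratio0 nul eqxx eq_sym (negPf l_neq0) (Xsym l o) Xdiag X00 /=.
ring.
Qed.

Lemma fractional_not_vertex : ~ is_vertex (THset k e) X.
Proof.
apply: (@not_vertex_of_normal_orth _ _ _ _ curve_tangent curve_tangent_sym).
  apply/negP => /eqP /matrixP /(_ o l) /eqP; rewrite curve_tangent_0l mxE.
  by rewrite !mulf_eq0 pnatr_eq0 subr_eq0 (gt_eqF Xl_gt0) (eq_sym 1) (lt_eqF Xl_lt1).
move=> c c_normal.
apply: (@normal_cone_orth_tangent _ _ (THset k e) X curve _ _ c o curve_radius) => //.
- exact: curve_radius_gt0.
- by case: X_base.
- by move=> t; apply: congr_expand.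
- by move=> t t_lt; split; [apply: curve00_gt0 | apply: normalized_curve_in].
Qed.

End NotVertex.

Section Corollary.
Variables (R : realType) (n : nat) (k : THkind) (e : rel 'I_n).
Implicit Types X Y : 'M[R]_n.+1.
Local Notation o := (ord0 : 'I_n.+1).

Lemma THbase_fractional X : THbase X -> \rank X != 1%N -> exists l, 0 < X o l < 1.
Proof.
move=> X_base rkX.
have [/existsP [l l_frac]|] := boolP [exists l, 0 < X o l < 1]; first by exists l.
rewrite negb_exists => /forallP no_frac; case/eqP: rkX.
have X01 : row0_01 X.
  move=> a; have /andP[Xa_ge0 Xa_le1] := THbase_row0_bounds a X_base.
  case: (eqVneq (X o a) 0) => [|Xa_neq0]; first by left.
  case: (eqVneq (X o a) 1) => [|Xa_neq1]; first by right.
  by case/negP: (no_frac a); rewrite lt_neqAle eq_sym Xa_neq0 Xa_ge0 lt_neqAle Xa_neq1.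
have -> : X = (\col_a X o a) *m (\col_a X o a)^T.
  by apply/matrixP => a b; rewrite outerE !mxE (THbase_01E X_base X01).
by apply: rank_outer; rewrite mxE; case: X_base.
Qed.

Lemma THset_vertexP X : THset k e X -> is_vertex (THset k e) X <-> \rank X = 1%N.
Proof.
move=> X_in; have X_base := THset_base X_in; split=> [X_vert | rkX].
  apply/eqP; apply: contraPT X_vert => /(THbase_fractional X_base) [l /andP[l_gt0 l_lt1]].
  exact: fractional_not_vertex X_in l_gt0 l_lt1.
apply: vertex_of_row0_01 => [Z|//|]; first exact: THset_base.
exact: THbase_rank1_01.
Qed.

Lemma THset_of_outer Y : psdmx Y -> Y o o = 1 -> (forall i, Y (vtx i) (vtx i) = Y o (vtx i)) ->
  (forall i j, 0 <= Y (vtx i) (vtx j)) -> (forall i j, e i j -> Y (vtx i) (vtx j) = 0) ->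
  THset k e Y.
Proof.
move=> Y_psd Y00 Ydiag Y_ge0 Ye; case: k => //=; do ?split=> // i j.
by move/Ye ->.
Qed.

Lemma one_chi0 (S : {set 'I_n}) : (one_chi S : 'cV[R]_n.+1) o 0 = 1.
Proof. by rewrite mxE unlift_none. Qed.

Lemma one_chi_vtx (S : {set 'I_n}) i : (one_chi S : 'cV[R]_n.+1) (vtx i) 0 = (i \in S)%:R.
Proof. by rewrite mxE /vtx liftK. Qed.

Lemma THset_one_chi (S : {set 'I_n}) :
  stable_set e S -> THset k e (one_chi S *m (one_chi S)^T : 'M[R]_n.+1).
Proof.
move=> S_stable; apply: THset_of_outer.
- exact: psdmx_outer.
- by rewrite outerE one_chi0 mulr1.
- by move=> i; rewrite !outerE one_chi0 one_chi_vtx mul1r -natrM mulnb andbb.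
- by move=> i j; rewrite outerE !one_chi_vtx mulr_ge0.
move=> i j eij; rewrite outerE !one_chi_vtx -natrM mulnb.
by case: (boolP (i \in S)) (boolP (j \in S)) => [iS|//] [jS|//]; case/negP: (S_stable i j iS jS).
Qed.

Lemma THset_edge X i j : THset k e X -> e i j -> X (vtx i) (vtx j) <= 0.
Proof. by case: k => /= [[_ _ _ Xe] /Xe -> | [[_ _ _ Xe] _] /Xe -> | [_ _ _ Xe] /Xe]. Qed.

Lemma THset_rank1_one_chi X : THset k e X -> \rank X = 1%N ->
  exists S : {set 'I_n}, stable_set e S /\ X = one_chi S *m (one_chi S)^T.
Proof.
move=> X_in rkX; have X_base := THset_base X_in.
have XE := THbase_rank1E X_base rkX; have X01 := THbase_rank1_01 X_base rkX.
pose S := [set i | X o (vtx i) == 1].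
have row0E a : X o a = (one_chi S : 'cV[R]_n.+1) a 0.
  case: (unliftP o a) => [i ->|->]; last by rewrite one_chi0; case: X_base.
  by rewrite one_chi_vtx inE; case: (X01 (vtx i)) => ->; rewrite ?eqxx // eq_sym oner_eq0.
exists S; split; last by apply/matrixP => a b; rewrite outerE XE !row0E.
move=> i j; rewrite !inE => /eqP Xi /eqP Xj; apply/negP => /(THset_edge X_in).
by rewrite XE Xi Xj mulr1 ler10.
Qed.

End Corollary.


Theorem corollary3p2 (R : realType) (n : nat) (e : rel 'I_n) (k : THkind) :
  simple_graph e ->
  (forall X : 'M[R]_n.+1, THset k e X -> (is_vertex (THset k e) X <-> \rank X = 1%N)) /\
  (forall X : 'M[R]_n.+1,
     is_vertex (THset k e) X <->
     exists S : {set 'I_n}, stable_set e S /\ X = one_chi S *m (one_chi S)^T).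
Proof.
(* Loops are excluded by the edge constraints themselves. *)
move=> _; split=> [|X]; first exact: THset_vertexP.
split=> [X_vert | [S [S_stable ->]]].
  by apply: THset_rank1_one_chi (proj1 X_vert) _; apply/(THset_vertexP (proj1 X_vert)).
apply/(THset_vertexP (THset_one_chi R k S_stable)).
by apply: rank_outer; rewrite one_chi0.
Qed.
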